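(* Let $G$ be a finite group, $k\ge 3$ an integer, and $A_1,\ldots,A_k\subseteq G$ nonempty subsets such that the multiplication map $A_1\times\cdots\times A_k\to G$, $(a_1,\ldots,a_k)\mapsto a_1\cdots a_k$, is a bijection. Fix $i$ with $1<i<k$, and let $K$, $H$, $K'$ be the subgroups of $G$ generated by the set $A_1\cdots A_{i-1}=\{a_1\cdots a_{i-1}: a_j\in A_j\}$, by $A_i$, and by the set $A_{i+1}\cdots A_k=\{a_{i+1}\cdots a_k: a_j\in A_j\}$, respectively. Let $M$ be the subgroup of $G$ generated by all conjugates $xHx^{-1}$ with $x\in K$, and $M'$ the subgroup generated by all conjugates $xHx^{-1}$ with $x\in K'$. Then $\mathrm{card}(A_i)$ divides both $|M|$ and $|M'|$. *)

From mathcomp Require Import all_boot all_fingroup.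
Set Implicit Arguments. Unset Strict Implicit. Unset Printing Implicit Defensive.
Local Open Scope group_scope.

Definition ordprod (gT : finGroupType) (k : nat) (a : 'I_k -> gT) : gT :=
  \prod_(j < k) a j.

Definition mul_bijective (gT : finGroupType) (k : nat) (A : 'I_k -> {set gT}) : Prop :=
  forall g : gT, exists! a : {ffun 'I_k -> gT},
    (forall j, a j \in A j) /\ ordprod a = g.

Definition rangeprod (gT : finGroupType) (k : nat) (A : 'I_k -> {set gT})
  (lo hi : nat) : {set gT} :=
  \prod_(j < k | (lo <= j) && (j < hi)) A j.

From mathcomp Require Import all_boot all_fingroup.
Set Implicit Arguments. Unset Strict Implicit. Unset Printing Implicit Defensive.
Local Open Scope group_scope.

(* Write [a_1 ... a_k = p a_i s] with [p] in [K] and [s] in [K'].  Since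
   [p a_i s = (p a_i p^-1) p s = p s (s^-1 a_i s)], whether this product lies
   in [M] (resp. [M']) does not depend on [a_i \in A_i].  Through the
   bijection [A_1 x ... x A_k -> G], the tuples whose product lies in [M]
   therefore form a set stable under changing the [i]-th coordinate within
   [A_i], and such a set is in bijection with a product [S_0 x A_i]. *)

Section OrdinalRanges.

Variables (R : Type) (idx : R) (op : Monoid.law idx) (k : nat) (F : 'I_k -> R).

Lemma big_insubd_ord (x0 : 'I_k) (lo hi : nat) : hi <= k ->
  \big[op/idx]_(lo <= j < hi) F (insubd x0 j) = \big[op/idx]_(j < k | lo <= j < hi) F j.
Proof.
move=> le_hi_k; rewrite big_geq_mkord.
rewrite (big_ord_widen_cond k (fun j => true && (lo <= j)) (fun j => F (insubd x0 j)) le_hi_k).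
by apply: eq_big => [j | j _]; rewrite ?valKd.
Qed.

Lemma big_ord_split_at (i : 'I_k) :
  \big[op/idx]_(j < k) F j =
  op (op (\big[op/idx]_(j < k | 0 <= j < i) F j) (F i))
     (\big[op/idx]_(j < k | i.+1 <= j < k) F j).
Proof.
rewrite (eq_bigl (fun j : 'I_k => 0 <= j < k)) => [|j]; last by rewrite ltn_ord.
have le_ik : i <= k by apply: ltnW.
rewrite -!(big_insubd_ord i) // (big_cat_nat (leq0n i) le_ik).
by rewrite [in LHS](big_ltn (ltn_ord i)) Monoid.mulmA [insubd i i](valKd i i).
Qed.

End OrdinalRanges.

Section CoordinateClosedSets.

Variables (I T : finType) (A : I -> {set T}) (i : I).

Let upd (a : {ffun I -> T}) (y : T) : {ffun I -> T} :=
  finfun (dfwith (T := fun=> T) a (i := i) y).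

Let upd_at (a : {ffun I -> T}) (y : T) : upd a y i = y.
Proof. by rewrite ffunE dfwith_in. Qed.

Let upd_off (a : {ffun I -> T}) (y : T) (j : I) : j != i -> upd a y j = a j.
Proof. by rewrite eq_sym => ne_ij; rewrite ffunE dfwith_out. Qed.

Let updK (a : {ffun I -> T}) (y : T) : a i = y -> upd a y = a.
Proof.
by move=> ay; apply/ffunP => j; case: (eqVneq j i) => [->|/upd_off //]; rewrite upd_at.
Qed.

Let upd_upd (a : {ffun I -> T}) (y z : T) : upd (upd a y) z = upd a z.
Proof.
by apply/ffunP => j; case: (eqVneq j i) => [->|ne]; rewrite ?upd_at // !upd_off.
Qed.

Let upd_family (a : {ffun I -> T}) (y : T) :
  a \in family A -> y \in A i -> upd a y \in family A.
Proof.
move=> /familyP Aa Ay; apply/familyP => j.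
by case: (eqVneq j i) => [->|/upd_off ->]; rewrite ?upd_at.
Qed.

Lemma dvdn_card_coord_closed (S : {set {ffun I -> T}}) :
  S \subset family A ->
  (forall a b, a \in S -> b \in family A -> (forall j, j != i -> a j = b j) -> b \in S) ->
  (#|A i| %| #|S|)%N.
Proof.
move=> /subsetP S_A S_closed.
have S_Ai a : a \in S -> a i \in A i by move/S_A/familyP.
have [Ai0 | [x0 Ax0]] := set_0Vmem (A i).
  rewrite Ai0 cards0 dvd0n cards_eq0 -subset0; apply/subsetP => a /S_Ai.
  by rewrite Ai0 inE.
have S_upd a y : a \in S -> y \in A i -> upd a y \in S.
  by move=> Sa Ay; apply: S_closed Sa (upd_family (S_A a Sa) Ay) _ => j /upd_off.
pose S0 := [set a in S | a i == x0].
have split_inj : {in S &, injective (fun a => (upd a x0, a i))}.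
  move=> a b _ _ [eq_ab eq_i]; apply/ffunP => j.
  by case: (eqVneq j i) => [-> // | ne]; rewrite -(upd_off a x0 ne) eq_ab upd_off.
have split_S : [set (upd a x0, a i) | a in S] = setX S0 (A i).
  apply/setP => -[b y]; rewrite !inE /=.
  apply/imsetP/andP => [[a Sa [-> ->]] | [/andP [Sb /eqP bx0] Ay]].
    by rewrite S_upd ?S_Ai // upd_at eqxx.
  by exists (upd b y); rewrite ?S_upd // upd_upd updK ?upd_at.
by rewrite -(card_in_imset split_inj) split_S cardsX dvdn_mull.
Qed.

End CoordinateClosedSets.

Section MiddleFactor.

Variables (gT : finGroupType) (G : {group gT}).

Lemma groupM_midl (p x s : gT) : x ^ p^-1 \in G -> (p * x * s \in G) = (p * s \in G).
Proof. by move=> Gx; rewrite [p * x]conjgCV -mulgA (groupMl _ Gx). Qed.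

Lemma groupM_midr (p x s : gT) : x ^ s \in G -> (p * x * s \in G) = (p * s \in G).
Proof. by move=> Gx; rewrite -mulgA [x * s]conjgC mulgA (groupMr _ Gx). Qed.

End MiddleFactor.

Section MulBijective.

Variables (gT : finGroupType) (k : nat) (A : 'I_k -> {set gT}).
Hypothesis bijA : mul_bijective A.

Lemma ordprod_inj_family : {in family A &, injective (fun a : {ffun 'I_k -> gT} => ordprod a)}.
Proof.
move=> a b /familyP Aa /familyP Ab eq_ab; case: (bijA (ordprod a)) => u [_ uniq_a].
by rewrite -(uniq_a a (conj Aa erefl)) -(uniq_a b (conj Ab (esym eq_ab))).
Qed.

Lemma card_family_mul_preimage (X : {set gT}) :
  #|[set a in family A | ordprod a \in X]| = #|X|.
Proof.
rewrite -(card_in_imset (sub_in2 _ ordprod_inj_family)) => [|a]; last by rewrite inE => /andP[].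
apply: eq_card => g; apply/imsetP/idP => [[a] | Xg].
  by rewrite inE => /andP [_ Xa] ->.
case: (bijA g) => a [[Aa ag] _]; exists a; last by rewrite ag.
by rewrite inE ag Xg andbT; apply/familyP.
Qed.

Lemma dvdn_card_mid_invariant (i : 'I_k) (X : {set gT}) :
  (forall p s x y, p \in rangeprod A 0 i -> s \in rangeprod A i.+1 k ->
     x \in A i -> y \in A i -> (p * x * s \in X) = (p * y * s \in X)) ->
  (#|A i| %| #|X|)%N.
Proof.
move=> X_mid; rewrite -(card_family_mul_preimage X).
apply: dvdn_card_coord_closed => [|a b]; first by apply/subsetP => a; rewrite inE => /andP[].
rewrite !inE => /andP [/familyP Aa Xa] Ab eq_ab; rewrite Ab; move/familyP: Ab => Ab.
have eq_range lo hi : i \notin [pred j : 'I_k | lo <= j < hi] ->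
    \prod_(j < k | lo <= j < hi) a j = \prod_(j < k | lo <= j < hi) b j.
  move=> i_out; apply: eq_bigr => j j_in; apply: eq_ab.
  by apply: contraNneq i_out => <-.
move: Xa; rewrite /ordprod !(big_ord_split_at _ _ i) !eq_range ?inE ?ltnn //.
by rewrite (X_mid _ _ _ (b i)) ?mem_prodg.
Qed.

End MulBijective.

Theorem lemma2p3 (gT : finGroupType) (k : nat) (A : 'I_k -> {set gT}) (i : 'I_k) :
  3 <= k ->
  (forall j, A j != set0) ->
  mul_bijective A ->
  0 < i -> i < k.-1 ->
  let K := <<rangeprod A 0 i>> in
  let H := <<A i>> in
  let K' := <<rangeprod A i.+1 k>> in
  let M := <<\bigcup_(x in K) (H :^ x^-1)>> in
  let M' := <<\bigcup_(x in K') (H :^ x^-1)>> in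
  (#|A i| %| #|M|)%N /\ (#|A i| %| #|M'|)%N.
Proof.
move=> _ _ bijA _ _ K H K' M M'.
have AiH x : x \in A i -> x \in H by apply: mem_gen.
split; apply: (dvdn_card_mid_invariant bijA) => p s x y Kp K's Ax Ay.
  have mid z : z \in A i -> (p * z * s \in M) = (p * s \in M).
    move=> Az; apply: groupM_midl; apply/mem_gen/bigcupP; exists p; first exact: mem_gen.
    by rewrite memJ_conjg AiH.
  by rewrite !mid.
have mid z : z \in A i -> (p * z * s \in M') = (p * s \in M').
  move=> Az; apply: groupM_midr; apply/mem_gen/bigcupP; exists s^-1.
    by rewrite groupV mem_gen.
  by rewrite invgK memJ_conjg AiH.
by rewrite !mid.
Qed.
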